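(* Let $(E,p,X)$ and $(F,q,Y)$ be étalé spaces over Boolean spaces and let $\varphi\colon(E,p,X)\to(F,q,Y)$ be a proper continuous relational covering morphism with underlying map $\overline{\varphi}\colon X\to Y$. Then $\overline{\varphi}$ is a proper continuous map of topological spaces.
   Context: A Boolean space is a Hausdorff space with a basis of compact-open sets. An étalé space $(E,p,X)$: topological spaces $E,X$ with a surjective local homeomorphism $p\colon E\to X$. Stalk: $F_y=q^{-1}(y)$. A relational morphism $\varphi\colon(E,p,X)\to(F,q,Y)$ is a map $\varphi\colon E\to\mathsf P(F)$ together with a map $\overline{\varphi}\colon X\to Y$ such that $\varphi(e)\subseteq F_{\overline{\varphi}(p(e))}$ for all $e\in E$. It is locally injective if $p(e)=p(e')$ and $\varphi(e)\cap\varphi(e')\neq\emptyset$ imply $e=e'$; locally surjective if whenever $y\in F$ with $q(y)=\overline{\varphi}(u)$ for some $u\in X$, there is $e\in E$ with $p(e)=u$ and $y\in\varphi(e)$; a relational covering morphism if both. With $\varphi^{-1}(A)=\{e\in E:\varphi(e)\cap A\neq\emptyset\}$, $\varphi$ is continuous if $\varphi^{-1}(A)$ is open for all open $A\subseteq F$ and proper if $\varphi^{-1}(K)$ is compact for all compact $K\subseteq F$. A continuous map is proper if inverse images of compact sets are compact. *)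

From HB Require Import structures.
From mathcomp Require Import all_boot all_order.
From mathcomp Require Import all_classical topology.
Set Implicit Arguments. Unset Strict Implicit. Unset Printing Implicit Defensive.
Local Open Scope classical_set_scope.

Definition boolean_space (T : topologicalType) : Prop :=
  hausdorff_space T /\
  (forall (U : set T) (x : T), open U -> U x ->
     exists K : set T, [/\ compact K, open K, K x & K `<=` U]).

(** Local homeomorphism: continuous, and every point has an open neighbourhood
    mapped injectively onto an open set, with the restriction a homeomorphism
    onto its (open) image, i.e. it maps open subsets of U to open sets. *)
Definition local_homeomorphism (E X : topologicalType) (p : E -> X) : Prop :=
  continuous p /\
  forall e : E, exists U : set E,
    [/\ open U, U e, open (p @` U), {in U &, injective p}
      & forall V : set E, open V -> V `<=` U -> open (p @` V)].

Definition etale (E X : topologicalType) (p : E -> X) : Prop :=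
  (forall x : X, exists e : E, p e = x) /\ local_homeomorphism p.

Definition relational_morphism (E X F Y : Type) (p : E -> X) (q : F -> Y)
  (phi : E -> set F) (phib : X -> Y) : Prop :=
  forall e : E, phi e `<=` q @^-1` [set phib (p e)].

Definition rel_locally_injective (E X F : Type) (p : E -> X)
  (phi : E -> set F) : Prop :=
  forall e e' : E, p e = p e' -> phi e `&` phi e' !=set0 -> e = e'.

Definition rel_locally_surjective (E X F Y : Type) (p : E -> X) (q : F -> Y)
  (phi : E -> set F) (phib : X -> Y) : Prop :=
  forall (y : F) (u : X), q y = phib u -> exists e : E, p e = u /\ phi e y.

Definition rel_covering_morphism (E X F Y : Type) (p : E -> X) (q : F -> Y)
  (phi : E -> set F) (phib : X -> Y) : Prop :=
  [/\ relational_morphism p q phi phib, rel_locally_injective p phi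
    & rel_locally_surjective p q phi phib].

Definition rel_preimage (E F : Type) (phi : E -> set F) (A : set F) : set E :=
  [set e | phi e `&` A !=set0].

Definition rel_continuous (E F : topologicalType) (phi : E -> set F) : Prop :=
  forall A : set F, open A -> open (rel_preimage phi A).

Definition rel_proper (E F : topologicalType) (phi : E -> set F) : Prop :=
  forall K : set F, compact K -> compact (rel_preimage phi K).

Definition proper_map (X Y : topologicalType) (f : X -> Y) : Prop :=
  forall K : set Y, compact K -> compact (f @^-1` K).

From HB Require Import structures.
From mathcomp Require Import all_boot all_order.
From mathcomp Require Import all_classical topology.
Set Implicit Arguments. Unset Strict Implicit. Unset Printing Implicit Defensive.
Local Open Scope classical_set_scope.

(* For a relational covering morphism, local surjectivity and the
   compatibility [phi e ⊆ q^-1 (phib (p e))] give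
   [phib^-1 (q C) = p (phi^-1 C)] for every [C ⊆ F].  With [C = q^-1 V] this
   exhibits [phib^-1 V] as the image of an open set under the open map [p].
   For properness, a compact [K ⊆ Y] is, near each of its points, the image of
   a compact set [C] lying in a sheet of [q] (take a compact-open neighbourhood
   inside the image of the sheet); then [phib^-1 (K ∩ N) = p (phi^-1 C)] is
   compact, and compactness of preimages is local on the target. *)

Lemma image_rel_preimage (E X F Y : Type) (p : E -> X) (q : F -> Y)
    (phi : E -> set F) (phib : X -> Y) (A : set F) :
  relational_morphism p q phi phib -> rel_locally_surjective p q phi phib ->
  p @` rel_preimage phi A = phib @^-1` (q @` A).
Proof.
move=> morph lsurj; apply/seteqP; split.
  by move=> _ [e [f [phief Af]] <-]; exists f => //; rewrite (morph e f phief).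
move=> x [f Af qf]; have [e [pe phief]] := lsurj f x qf.
by exists e => //; exists f.
Qed.

Lemma local_homeomorphism_open (E X : topologicalType) (p : E -> X) :
  local_homeomorphism p -> forall W, open W -> open (p @` W).
Proof.
move=> [_ lh] W oW; rewrite openE => _ [e We <-].
have [U [oU Ue _ _ pUopen]] := lh e.
apply: (@filterS _ _ _ (p @` (W `&` U))); first exact: image_subset.
apply: open_nbhs_nbhs; split; last by exists e.
by apply: pUopen; [exact: openI | exact: subIsetr].
Qed.

Lemma ultra_fmap {T U : Type} (f : T -> U) {G : set_system T} :
  UltraFilter G -> UltraFilter (f @ G).
Proof.
move=> UG; split=> [|H PH GH]; first exact: fmap_proper_filter.
apply/seteqP; split=> [A HA|]; last exact: GH.
have [//|GAc] := in_ultra_setVsetC (f @^-1` A) UG.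
have HAc : H (~` A) by exact: GH.
by have [x []] := filter_ex (filterI HA HAc).
Qed.

Lemma compact_preimage_of_local (X Y : topologicalType) (f : X -> Y)
    (K : set Y) : compact K ->
  (forall y, K y -> exists2 N, nbhs y N & compact (f @^-1` (K `&` N))) ->
  compact (f @^-1` K).
Proof.
rewrite compact_ultra => cK loc; rewrite compact_ultra => G UG GK.
have [y [Ky fGy]] := cK _ (ultra_fmap f UG) GK.
have [N Ny] := loc y Ky; rewrite compact_ultra => /(_ G UG) [].
  by rewrite preimage_setI; apply: filterI => //; exact: fGy N Ny.
by move=> x [[Kx _] Gx]; exists x.
Qed.

Lemma compact_lift_in_sheet (F Y : topologicalType) (q : F -> Y)
    (U : set F) (K : set Y) : open U -> {in U &, injective q} ->
  (forall V, open V -> V `<=` U -> open (q @` V)) ->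
  compact K -> K `<=` q @` U ->
  exists2 C, compact C & q @` C = K.
Proof.
move=> oU qinj qopen + KqU; rewrite compact_ultra => cK.
exists (U `&` q @^-1` K); last first.
  apply/seteqP; split; first by move=> _ [z [_ ?] <-].
  by move=> y Ky; have [z Uz qzy] := KqU y Ky; exists z; rewrite /= ?qzy.
rewrite compact_ultra => G UG GC.
have GK : G (q @^-1` K) by apply: filterS GC; exact: subIsetr.
have [y [Ky qGy]] := cK _ (ultra_fmap q UG) GK.
have [c Uc qcy] := KqU y Ky.
(* [q] is a homeomorphism on [U], so [G] converges to the lift of [y]. *)
exists c; split; first by split; rewrite //= qcy.
move=> O; rewrite nbhsE => -[O' [oO' O'c] O'O].
have qO'U : nbhs y (q @` (O' `&` U)).
  apply: open_nbhs_nbhs; split; last by exists c.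
  by apply: qopen; [exact: openI | exact: subIsetr].
apply: (@filterS _ _ _ (U `&` q @^-1` (q @` (O' `&` U)))).
  move=> w [Uw [v [O'v Uv] qvw]].
  by apply: O'O; rewrite -(qinj v w (mem_set Uv) (mem_set Uw) qvw).
have GqO'U : G (q @^-1` (q @` (O' `&` U))) := qGy _ qO'U.
by apply: filterI GqO'U; apply: filterS GC; exact: subIsetl.
Qed.

Lemma etale_local_compact_lift (F Y : topologicalType) (q : F -> Y)
    (K : set Y) : etale q -> boolean_space Y -> compact K ->
  forall y, exists2 N, open_nbhs y N & exists2 C, compact C & q @` C = K `&` N.
Proof.
move=> [qsurj [_ qlh]] [hausY boolY] cK y.
have [f qf] := qsurj y; have [U [oU Uf oqU qinj qopen]] := qlh f.
have [N [cN oN Ny NqU]] := boolY _ y oqU (ex_intro2 _ _ f Uf qf).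
exists N => //; apply: compact_lift_in_sheet oU qinj qopen _ _.
  exact: compact_closedI cK (compact_closed hausY cN).
by move=> z [_ /NqU].
Qed.

Theorem lemma1p12 (E X F Y : topologicalType) (p : E -> X) (q : F -> Y)
  (phi : E -> set F) (phib : X -> Y) :
  boolean_space X -> boolean_space Y ->
  etale p -> etale q ->
  rel_covering_morphism p q phi phib ->
  rel_continuous phi -> rel_proper phi ->
  continuous phib /\ proper_map phib.
Proof.
move=> _ boolY [_ plh] etq [morph _ lsurj] rcont rproper.
have [pcont _] := plh; have [qsurj [qcont _]] := etq.
split.
  apply/continuousP => V oV.
  have qT : q @` setT = setT.
    by apply/seteqP; split=> // y _; have [f qf] := qsurj y; exists f.
  rewrite -(image_preimage V qT) -(image_rel_preimage _ morph lsurj).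
  apply: (local_homeomorphism_open plh) (rcont _ _).
  exact: (continuousP _).1 qcont _ oV.
move=> K cK; apply: compact_preimage_of_local => // y Ky.
have [N yN [C cC qC]] := etale_local_compact_lift etq boolY cK y.
exists N; first exact: open_nbhs_nbhs.
rewrite -qC -(image_rel_preimage _ morph lsurj).
by apply: continuous_compact (rproper _ cC); exact: continuous_subspaceT.
Qed.
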